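(* Consider Algorithm 1 applied to $\min\varphi(w)$ s.t. $w\in D$, assume the inner loop always terminates, and let $\{w^j\}$ be the resulting infinite sequence of outer iterates. Assume that $\varphi$ is bounded from below and uniformly continuous on $\mathcal S_\varphi(w^0):=\{w\in D:\varphi(w)\le\varphi(w^0)\}$. Then $\|w^{j+1}-w^j\|\to0$ as $j\to\infty$.
   Context: $\mathbb W$ is a Euclidean space, $\varphi\colon\mathbb W\to\mathbb R$ continuously differentiable, $D\subset\mathbb W$ nonempty and closed (neither need be convex). Algorithm 1 (general spectral gradient method, without termination test): parameters $\tau>1$, $\sigma\in(0,1)$, $0<\gamma_{\min}\le\gamma_{\max}<\infty$, $m\in\mathbb N$, starting point $w^0\in D$. For $j=0,1,2,\dots$: set $m_j:=\min(j,m)$ and choose $\gamma_j^0\in[\gamma_{\min},\gamma_{\max}]$; for $i=1,2,\dots$ set $\gamma_{j,i}:=\tau^{i-1}\gamma_j^0$ and compute a (global) solution $w^{j,i}$ of $\min_w \varphi(w^j)+\langle\nabla\varphi(w^j),w-w^j\rangle+\frac{\gamma_{j,i}}2\|w-w^j\|^2$ s.t. $w\in D$ (subproblem $Q(j,i)$); the inner loop stops at the first $i$ with $\varphi(w^{j,i})\le\max_{r=0,\dots,m_j}\varphi(w^{j-r})+\sigma\langle\nabla\varphi(w^j),w^{j,i}-w^j\rangle$; then set $i_j:=i$, $\gamma_j:=\gamma_{j,i_j}$, $w^{j+1}:=w^{j,i_j}$. *)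

From HB Require Import structures.
From mathcomp Require Import all_boot all_order all_algebra.
From mathcomp Require Import all_classical all_reals all_analysis.
Set Implicit Arguments. Unset Strict Implicit. Unset Printing Implicit Defensive.
Import Order.TTheory GRing.Theory Num.Theory.
Import numFieldNormedType.Exports.
Local Open Scope ring_scope.

(* The Euclidean space W is modelled as R^n = 'rV[R]_n with the standard
   inner product and the induced Euclidean norm. *)

Definition dotE (R : realType) (n : nat) (u v : 'rV[R]_n) : R :=
  \sum_(i < n) u ord0 i * v ord0 i.

Definition normE (R : realType) (n : nat) (u : 'rV[R]_n) : R :=
  Num.sqrt (dotE u u).

Definition C1_with_gradient (R : realType) (n : nat)
  (phi : 'rV[R]_n -> R) (grad : 'rV[R]_n -> 'rV[R]_n) : Prop :=
  (forall w, differentiable phi w /\ forall v, 'd phi w v = dotE (grad w) v)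
  /\ continuous grad.

Definition Qmodel (R : realType) (n : nat)
  (phi : 'rV[R]_n -> R) (grad : 'rV[R]_n -> 'rV[R]_n)
  (wj : 'rV[R]_n) (gam : R) (w : 'rV[R]_n) : R :=
  phi wj + dotE (grad wj) (w - wj) + gam / 2 * normE (w - wj) ^+ 2.

Definition solves_Q (R : realType) (n : nat)
  (phi : 'rV[R]_n -> R) (grad : 'rV[R]_n -> 'rV[R]_n) (D : set 'rV[R]_n)
  (wj : 'rV[R]_n) (gam : R) (x : 'rV[R]_n) : Prop :=
  D x /\ forall v, D v -> Qmodel phi grad wj gam x <= Qmodel phi grad wj gam v.

Definition refval (R : realType) (n : nat) (phi : 'rV[R]_n -> R)
  (w : nat -> 'rV[R]_n) (m j : nat) : R :=
  \big[Num.max/phi (w j)]_(r < (minn j m).+1) phi (w (j - r)%N).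

Definition accepted (R : realType) (n : nat)
  (phi : 'rV[R]_n -> R) (grad : 'rV[R]_n -> 'rV[R]_n) (sigma : R)
  (w : nat -> 'rV[R]_n) (m j : nat) (x : 'rV[R]_n) : Prop :=
  phi x <= refval phi w m j + sigma * dotE (grad (w j)) (x - w j).

(* (w, gam0, wt, ii) is a run of Algorithm 1 (infinite, every inner loop
   terminating): gam0 j = gamma_j^0, wt j i = w^{j,i}, ii j = i_j. *)
Definition alg1_run (R : realType) (n : nat)
  (phi : 'rV[R]_n -> R) (grad : 'rV[R]_n -> 'rV[R]_n) (D : set 'rV[R]_n)
  (tau sigma gmin gmax : R) (m : nat)
  (w : nat -> 'rV[R]_n) (gam0 : nat -> R) (wt : nat -> nat -> 'rV[R]_n)
  (ii : nat -> nat) : Prop :=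
  D (w 0%N) /\
  forall j : nat,
    [/\ gmin <= gam0 j <= gmax,
        (1 <= ii j)%N,
        (forall i : nat, (1 <= i <= ii j)%N ->
           solves_Q phi grad D (w j) (tau ^+ i.-1 * gam0 j) (wt j i)),
        (forall i : nat, (1 <= i < ii j)%N ->
           ~ accepted phi grad sigma w m j (wt j i)) &
        accepted phi grad sigma w m j (wt j (ii j)) /\
        w j.+1 = wt j (ii j)].

From HB Require Import structures.
From mathcomp Require Import all_boot all_order all_algebra.
From mathcomp Require Import all_classical all_reals all_analysis.
From mathcomp Require Import lra zify.
Set Implicit Arguments. Unset Strict Implicit. Unset Printing Implicit Defensive.
Import Order.TTheory GRing.Theory Num.Theory.
Import numFieldNormedType.Exports.
Local Open Scope ring_scope.
Local Open Scope classical_set_scope.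

(* Proof idea (Grippo-Lampariello-Lucidi style nonmonotone line search).
   Write f_j := phi(w^j), d_j := ||w^{j+1} - w^j|| and let V_j be the
   reference value max_{r <= min(j,m)} f_{j-r}.  Testing the subproblem
   Q(j,i_j) against the feasible point w^j gives the model decrease
   <grad, w^{j+1} - w^j> <= -(gamma_j/2) d_j^2, so the acceptance test yields
     f_{j+1} <= V_j - c d_j^2      with c = sigma * gamma_min / 2.
   The file first treats this inequality abstractly, for real sequences:
   V is nonincreasing (so every f_j <= f_0, the iterates stay in the level
   set), bounded below, hence V_j decreases to its infimum V*.  At a peak
   index l (where f_l = V_j for some j >= l) f_l is close to V*; the descent
   inequality and uniform continuity then propagate closeness to V* and
   smallness of d backwards, one index at a time, over the m+1 indices before
   the peak.  Since every window of length m+1 contains a peak, d_j -> 0.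
   Afterwards the descent inequality is derived for a run of Algorithm 1. *)

Definition winmax (R : realType) (f : nat -> R) (m j : nat) : R :=
  \big[Num.max/f j]_(r < (minn j m).+1) f (j - r)%N.

Lemma refvalE (R : realType) (n : nat) (phi : 'rV[R]_n -> R)
  (w : nat -> 'rV[R]_n) (m : nat) :
  refval phi w m = winmax (fun j => phi (w j)) m.
Proof. by []. Qed.

Lemma winmax_ge (R : realType) (f : nat -> R) (m j r : nat) :
  (r <= minn j m)%N -> f (j - r)%N <= winmax f m j.
Proof.
move=> hr; have hr' : (r < (minn j m).+1)%N by [].
exact: (le_bigmax _ (fun k : 'I_(minn j m).+1 => f (j - k)%N) (Ordinal hr')).
Qed.

Lemma winmax_attained (R : realType) (f : nat -> R) (m j : nat) :
  exists2 r, (r <= minn j m)%N & winmax f m j = f (j - r)%N.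
Proof.
set F := fun k : 'I_(minn j m).+1 => f (j - k)%N.
case: (@arg_maxP _ _ _ ord0 predT F isT) => r _ r_max.
exists r; first by rewrite -ltnS.
apply/le_anti; rewrite (winmax_ge _ (_ : (r <= minn j m)%N)) ?andbT;
  last by rewrite -ltnS.
apply: bigmax_le => [|k _]; last exact: r_max.
by have := r_max ord0 isT; rewrite /F subn0.
Qed.

Section NonmonotoneDescent.
Variables (R : realType) (f d : nat -> R) (m : nat) (c : R).
Hypothesis c_gt0 : 0 < c.
Hypothesis descent : forall j, f j.+1 <= winmax f m j - c * d j ^+ 2.

Local Notation V := (winmax f m).

(* The newest term of window j+1 is below V_j, the others belong to
   window j. *)
Lemma winmax_nonincreasing j : V j.+1 <= V j.
Proof.
have [[|r] hr ->] := winmax_attained f m j.+1.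
  rewrite subn0; apply: le_trans (descent j) _.
  by rewrite lerBlDr lerDl mulr_ge0 ?sqr_ge0 ?ltW.
by rewrite subSS; apply: winmax_ge; move: hr; lia.
Qed.

Lemma winmax_le i j : (i <= j)%N -> V j <= V i.
Proof.
elim: j => [|j IH]; first by rewrite leqn0 => /eqP ->.
rewrite leq_eqVlt => /orP[/eqP -> //|]; rewrite ltnS => /IH.
exact: le_trans (winmax_nonincreasing j).
Qed.

Lemma le_start j : f j <= f 0%N.
Proof.
have V0 : V 0%N = f 0%N by have [r _ ->] := winmax_attained f m 0%N.
rewrite -V0; apply: le_trans (winmax_le (leq0n j)).
by have := winmax_ge f (leq0n (minn j m)); rewrite subn0.
Qed.

Variable L : R.
Hypothesis f_bounded : forall j, L <= f j.
Hypothesis d_ge0 : forall j, 0 <= d j.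
Hypothesis f_uc : forall eps, 0 < eps -> exists2 delta, 0 < delta &
  forall j, d j < delta -> `|f j.+1 - f j| < eps.

Let Vinf := inf (range V).

Lemma V_has_lbound : has_lbound (range V).
Proof.
exists L => _ [j _ <-]; have [r _ ->] := winmax_attained f m j.
exact: f_bounded.
Qed.

Lemma Vinf_le j : Vinf <= V j.
Proof. by apply: (ge_inf V_has_lbound); exists j. Qed.

Lemma V_near_Vinf eps : 0 < eps -> exists N, forall j, (N <= j)%N -> V j < Vinf + eps.
Proof.
move=> eps_gt0.
have hinf : has_inf (range V) by split; [exists (V 0%N), 0%N | exact: V_has_lbound].
have [_ [N _ <-] VN] := inf_adherent eps_gt0 hinf.
by exists N => j hj; apply: le_lt_trans VN; apply: winmax_le.
Qed.

(* Backward step: far out, if f_{i+1} is close to Vinf then the step d_i is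
   small (descent inequality) and hence f_i is close to Vinf too (uniform
   continuity). *)
Lemma back_step eps : 0 < eps -> exists2 eta, 0 < eta <= eps & exists N,
  forall i, (N <= i)%N -> `|f i.+1 - Vinf| < eta -> `|f i - Vinf| < eps /\ d i < eps.
Proof.
move=> eps_gt0; have eps2_gt0 : 0 < eps / 2 by rewrite divr_gt0.
have [delta delta_gt0 uc] := f_uc eps2_gt0.
pose e := Num.min eps delta.
have e_gt0 : 0 < e by rewrite lt_min eps_gt0.
pose eta := Num.min (eps / 2) (c * e ^+ 2 / 2).
have eta_le : eta <= eps / 2 /\ eta <= c * e ^+ 2 / 2.
  by split; rewrite ge_min lexx ?orbT.
have eta_gt0 : 0 < eta by rewrite lt_min eps2_gt0 !(divr_gt0, mulr_gt0, exprn_gt0).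
exists eta; first by rewrite eta_gt0 /=; lra.
have [N VN] := V_near_Vinf eta_gt0.
exists N => i iN; rewrite ltr_norml => /andP[close_l close_r].
have d_small : d i < e.
  have c_d2 : c * d i ^+ 2 < c * e ^+ 2.
    by have := descent i; have := VN i iN; lra.
  by rewrite -(ltr_pXn2r (_ : 0 < 2)%N) ?nnegrE ?d_ge0 ?ltW // -(ltr_pM2l c_gt0).
have d_delta : d i < delta by apply: lt_le_trans d_small _; rewrite ge_min lexx orbT.
have := uc i d_delta; rewrite ltr_norml => /andP[uc_l uc_r].
split; last by apply: lt_le_trans d_small _; rewrite ge_min lexx.
rewrite ltr_norml; apply/andP; split; lra.
Qed.

Definition peak (l : nat) : Prop := exists2 j, (l <= j)%N & V j = f l.

Lemma peak_tail K eps : 0 < eps -> exists N, forall l, peak l -> (N <= l)%N ->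
  forall k, (k <= K)%N ->
    `|f (l - k)%N - Vinf| < eps /\ ((k < K)%N -> d (l - k.+1)%N < eps).
Proof.
elim: K eps => [|K IH] eps eps_gt0.
  have [N VN] := V_near_Vinf eps_gt0.
  exists N => l [j lj Vj] lN k; rewrite leqn0 => /eqP -> {k}; split => //.
  rewrite subn0 -Vj ger0_norm ?subr_ge0 ?Vinf_le // ltrBlDl.
  by apply: VN; apply: leq_trans lj.
have [eta /andP[eta_gt0 eta_le] [N2 back]] := back_step eps_gt0.
have [N1 tail] := IH eta eta_gt0.
exists (maxn N1 (N2 + K.+1)) => l peak_l; rewrite geq_max => /andP[lN1 lN2] k kK.
pose i := (l - K.+1)%N.
have ei : (l - K)%N = i.+1 by rewrite /i; lia.
have [iclose idsmall] : `|f i - Vinf| < eps /\ d i < eps.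
  apply: back; first by rewrite /i; lia.
  by rewrite -ei; have [] := tail l peak_l lN1 K (leqnn K).
have [kK'|Kltk] := leqP k K.
  have [fk dk] := tail l peak_l lN1 k kK'.
  split; first exact: lt_le_trans fk eta_le.
  move=> _; have [kltK|Klek] := ltnP k K; first exact: lt_le_trans (dk kltK) eta_le.
  by have -> : k = K by lia.
have -> : k = K.+1 by lia.
by split; [exact: iclose | rewrite ltnn].
Qed.

Lemma nonmonotone_steps_cvg0 : d @ \oo --> (0 : R).
Proof.
apply/cvgrPdist_lt => eps eps_gt0.
have [N tail] := peak_tail m.+1 eps_gt0.
exists N => // j /= jN; rewrite sub0r normrN ger0_norm ?d_ge0 //.
have [r rJ eJ] := winmax_attained f m (j + m.+1).
have rm : (r <= m)%N by move: rJ; rewrite leq_min => /andP[].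
pose l := (j + m.+1 - r)%N.
have peak_l : peak l by exists (j + m.+1)%N; [rewrite /l leq_subr | exact: eJ].
have lN : (N <= l)%N by rewrite /l; lia.
have kbound : (l - j.+1 <= m.+1)%N by rewrite /l; lia.
have [_ dsmall] := tail l peak_l lN _ kbound.
have ej : (l - (l - j.+1).+1)%N = j by rewrite /l; lia.
by rewrite -ej; apply: dsmall; rewrite /l; lia.
Qed.

End NonmonotoneDescent.

Section SubproblemDecrease.
Variables (R : realType) (n : nat) (phi : 'rV[R]_n -> R)
  (grad : 'rV[R]_n -> 'rV[R]_n) (D : set 'rV[R]_n).

Lemma dotE0 (u : 'rV[R]_n) : dotE u 0 = 0.
Proof. by rewrite /dotE big1 // => i _; rewrite mxE mulr0. Qed.

Lemma normE0 : normE (0 : 'rV[R]_n) = 0.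
Proof. by rewrite /normE dotE0 sqrtr0. Qed.

Lemma Qmodel_center (wj : 'rV[R]_n) (gam : R) : Qmodel phi grad wj gam wj = phi wj.
Proof. by rewrite /Qmodel subrr dotE0 normE0 expr0n /= mulr0 !addr0. Qed.

(* Comparing a solution of the subproblem with the feasible centre: the
   linear term is at least as negative as the proximal term is positive. *)
Lemma solves_Q_model_decrease (wj x : 'rV[R]_n) (gam : R) :
  D wj -> solves_Q phi grad D wj gam x ->
  dotE (grad wj) (x - wj) + gam / 2 * normE (x - wj) ^+ 2 <= 0.
Proof.
move=> Dwj [_ x_min]; have := x_min wj Dwj.
rewrite Qmodel_center /Qmodel; lra.
Qed.

Lemma accepted_sufficient_decrease (sigma gmin gam : R) (w : nat -> 'rV[R]_n)
  (m j : nat) (x : 'rV[R]_n) :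
  0 < sigma -> gmin <= gam -> D (w j) -> solves_Q phi grad D (w j) gam x ->
  accepted phi grad sigma w m j x ->
  phi x <= refval phi w m j - sigma * gmin / 2 * normE (x - w j) ^+ 2.
Proof.
move=> sigma_gt0 gmin_le Dwj x_sol; rewrite /accepted.
have model := mulr_ge0_le0 (ltW sigma_gt0) (solves_Q_model_decrease Dwj x_sol).
have extra : 0 <= sigma * (gam - gmin) * normE (x - w j) ^+ 2.
  by rewrite mulr_ge0 ?sqr_ge0 // mulr_ge0 ?subr_ge0 // ltW.
lra.
Qed.

End SubproblemDecrease.

Section Algorithm1Run.
Variables (R : realType) (n : nat) (phi : 'rV[R]_n -> R)
  (grad : 'rV[R]_n -> 'rV[R]_n) (D : set 'rV[R]_n)
  (tau sigma gmin gmax : R) (m : nat) (w : nat -> 'rV[R]_n)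
  (gam0 : nat -> R) (wt : nat -> nat -> 'rV[R]_n) (ii : nat -> nat).
Hypothesis tau_ge1 : 1 <= tau.
Hypothesis gmin_ge0 : 0 <= gmin.
Hypothesis run : alg1_run phi grad D tau sigma gmin gmax m w gam0 wt ii.

Let gam (j : nat) : R := tau ^+ (ii j).-1 * gam0 j.

Lemma run_step j :
  solves_Q phi grad D (w j) (gam j) (w j.+1) /\ accepted phi grad sigma w m j (w j.+1).
Proof.
have [_ ii_ge1 solves _ [acc ->]] := run.2 j.
by split => //; apply: solves; rewrite ii_ge1 leqnn.
Qed.

Lemma run_feasible j : D (w j).
Proof. by case: j => [|j]; [exact: run.1 | have [[]] := run_step j]. Qed.

(* The backtracking only enlarges gamma_j^0 >= gamma_min. *)
Lemma run_gam_ge j : gmin <= gam j.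
Proof.
have [/andP[gmin_le _] _ _ _ _] := run.2 j.
have gam0_ge0 : 0 <= gam0 j := le_trans gmin_ge0 gmin_le.
by apply: (le_trans gmin_le); rewrite /gam ler_peMl // exprn_ege1.
Qed.

Lemma run_descent (sigma_gt0 : 0 < sigma) j :
  phi (w j.+1) <= refval phi w m j - sigma * gmin / 2 * normE (w j.+1 - w j) ^+ 2.
Proof.
have [sol acc] := run_step j.
exact: accepted_sufficient_decrease sigma_gt0 (run_gam_ge j) (run_feasible j) sol acc.
Qed.

End Algorithm1Run.

Theorem mainTheorem4 (R : realType) (n : nat)
  (phi : 'rV[R]_n -> R) (grad : 'rV[R]_n -> 'rV[R]_n) (D : set 'rV[R]_n)
  (tau sigma gmin gmax : R) (m : nat)
  (w : nat -> 'rV[R]_n) (gam0 : nat -> R) (wt : nat -> nat -> 'rV[R]_n)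
  (ii : nat -> nat) :
  C1_with_gradient phi grad ->
  closed D ->
  1 < tau -> 0 < sigma < 1 -> 0 < gmin -> gmin <= gmax ->
  alg1_run phi grad D tau sigma gmin gmax m w gam0 wt ii ->
  (exists L : R, forall v, D v -> phi v <= phi (w 0%N) -> L <= phi v) ->
  (forall eps : R, 0 < eps -> exists2 delta : R, 0 < delta &
     forall u v, D u -> phi u <= phi (w 0%N) -> D v -> phi v <= phi (w 0%N) ->
       normE (u - v) < delta -> `|phi u - phi v| < eps) ->
  (fun j : nat => normE (w j.+1 - w j)) @ \oo --> (0 : R).
Proof.
move=> _ _ tau_gt1 /andP[sigma_gt0 _] gmin_gt0 _ run [L phi_bounded] phi_uc.
pose f j := phi (w j).
pose d j := normE (w j.+1 - w j).
have c_gt0 : 0 < sigma * gmin / 2 by rewrite divr_gt0 ?mulr_gt0.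
have descent j : f j.+1 <= winmax f m j - sigma * gmin / 2 * d j ^+ 2.
  by rewrite /f -refvalE; exact: run_descent (ltW tau_gt1) (ltW gmin_gt0) run sigma_gt0 j.
have feasible := run_feasible run.
have level j : f j <= f 0%N := le_start c_gt0 descent j.
apply: (nonmonotone_steps_cvg0 c_gt0 descent (L := L)).
- by move=> j; apply: phi_bounded (feasible j) (level j).
- by move=> j; apply: sqrtr_ge0.
- move=> eps eps_gt0; have [delta delta_gt0 uc] := phi_uc eps eps_gt0.
  by exists delta => // j; apply: uc; rewrite ?feasible ?level.
Qed.
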